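(* Let $\mathbf{x}=(x_s)_{s\in\mathbb{Z}^3}\in\mathbb{C}^{\mathbb{Z}^3}$ satisfy the Kashaev equation, i.e. $K^C(\mathbf{x})=0$ for every unit cube $C$ in $\mathbb{Z}^3$. Then for every $v\in\mathbb{Z}^3$, $$\Big(\prod_{C\ni v}K^C_v(\mathbf{x})\Big)^2=\Big(\prod_{S\ni v}(x_vx_{v_2}+x_{v_1}x_{v_3})\Big)^2,$$ where the first product is over the $8$ unit cubes $C$ containing $v$, and the second product is over the $12$ unit squares $S$ (with vertices in $\mathbb{Z}^3$) containing $v$, with $v,v_1,v_2,v_3$ the vertices of $S$ listed in cyclic order. Moreover, $$\Big(\prod_{\substack{(i_1,i_2,i_3)\in\{-1,1\}^3\\ i_1i_2i_3=1}}K_v^{C_v(i_1,i_2,i_3)}(\mathbf{x})\Big)^2=\Big(\prod_{\substack{(i_1,i_2,i_3)\in\{-1,1\}^3\\ i_1i_2i_3=-1}}K_v^{C_v(i_1,i_2,i_3)}(\mathbf{x})\Big)^2=\prod_{S\ni v}(x_vx_{v_2}+x_{v_1}x_{v_3}).$$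
   Context: For $v\in\mathbb{Z}^3$ and $(i_1,i_2,i_3)\in\{-1,1\}^3$, $C_v(i_1,i_2,i_3)$ denotes the unique unit cube in $\mathbb{Z}^3$ containing $v$ and $v+(i_1,i_2,i_3)$. For a unit cube $C$ and $\mathbf{x}\in\mathbb{C}^{\mathbb{Z}^3}$, label the values of $\mathbf{x}$ at the vertices of $C$ as $z_{ijk}$, $i,j,k\in\{0,1\}$, via any identification of $C$ with $\{0,1\}^3$ by a cube isomorphism, and set $a=z_{000}z_{111}$, $b=z_{100}z_{011}$, $c=z_{010}z_{101}$, $d=z_{001}z_{110}$, $s=z_{000}z_{011}z_{101}z_{110}$, $t=z_{111}z_{100}z_{010}z_{001}$, and $K^C(\mathbf{x})=2(a^2+b^2+c^2+d^2)-(a+b+c+d)^2-4(s+t)$ (this is independent of the identification). For a vertex $v$ of $C$, $K^C_v(\mathbf{x})$ is defined by choosing such a labeling with $z_{000}=x_v$ (so $z_{111}$ is the value at the vertex opposite $v$) and setting $K^C_v(\mathbf{x})=\tfrac12\big(z_{111}z_{000}^2-z_{000}(z_{100}z_{011}+z_{010}z_{101}+z_{001}z_{110})\big)-z_{100}z_{010}z_{001}$. *)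

(* the complex numbers are R[i] for R : realType. *)
From HB Require Import structures.
From mathcomp Require Import all_boot all_order all_algebra.
From mathcomp Require Import complex reals.
Set Implicit Arguments. Unset Strict Implicit. Unset Printing Implicit Defensive.
Import Order.TTheory GRing.Theory Num.Theory.
Local Open Scope ring_scope.

Definition pt := (int * int * int)%type.
Definition padd (v w : pt) : pt := (v.1.1 + w.1.1, v.1.2 + w.1.2, v.2 + w.2).
Definition sgnb (b : bool) : int := if b then 1 else -1.

Section Kashaev.
Variable F : fieldType.

Definition Kpoly (z000 z100 z010 z001 z011 z101 z110 z111 : F) : F :=
  let a := z000 * z111 in let b := z100 * z011 in
  let c := z010 * z101 in let d := z001 * z110 in
  let s := z000 * z011 * z101 * z110 in let t := z111 * z100 * z010 * z001 in
  2 * (a ^+ 2 + b ^+ 2 + c ^+ 2 + d ^+ 2) - (a + b + c + d) ^+ 2 - 4 * (s + t).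

Definition Kvpoly (z000 z100 z010 z001 z011 z101 z110 z111 : F) : F :=
  2^-1 * (z111 * z000 ^+ 2 - z000 * (z100 * z011 + z010 * z101 + z001 * z110))
  - z100 * z010 * z001.
End Kashaev.

Section Defs.
Variable F : fieldType.
Variable x : pt -> F.

Definition Kcube (w : pt) : F :=
  let z i j k := x (padd w (i, j, k)) in
  Kpoly (z 0 0 0) (z 1 0 0) (z 0 1 0) (z 0 0 1) (z 0 1 1) (z 1 0 1) (z 1 1 0) (z 1 1 1).

Definition kashaev : Prop := forall w : pt, Kcube w = 0.

(* K_v^{C_v(i1,i2,i3)}: labelling z_abc = x(v + (a i1, b i2, c i3)),
   a cube isomorphism sending 000 to v *)
Definition Kv (v : pt) (i1 i2 i3 : int) : F :=
  let z a b c := x (padd v (a * i1, b * i2, c * i3)) in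
  Kvpoly (z 0 0 0) (z 1 0 0) (z 0 1 0) (z 0 0 1) (z 0 1 1) (z 1 0 1) (z 1 1 0) (z 1 1 1).

Definition Kvb (v : pt) (i : bool * bool * bool) : F :=
  Kv v (sgnb i.1.1) (sgnb i.1.2) (sgnb i.2).

(* term x_v x_{v2} + x_{v1} x_{v3} for the square v, v+d1, v+d1+d2, v+d2 *)
Definition sqterm (v d1 d2 : pt) : F :=
  x v * x (padd (padd v d1) d2) + x (padd v d1) * x (padd v d2).

Definition sqprod (v : pt) : F :=
  \prod_(st : bool * bool)
    (sqterm v (sgnb st.1, 0, 0) (0, sgnb st.2, 0)
     * sqterm v (sgnb st.1, 0, 0) (0, 0, sgnb st.2)
     * sqterm v (0, sgnb st.1, 0) (0, 0, sgnb st.2)).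
End Defs.

(* Completing squares, K^C_v(x)^2 equals the product of the three face terms
   x_v x_{v2} + x_{v1} x_{v3} of the faces of C through v, plus x_v^2 K^C(x) / 4;
   so on a solution of the Kashaev equation each K^C_v(x)^2 is that product of
   three face terms.  Each of the 12 unit squares through v lies in exactly two
   of the cubes C_v(i1,i2,i3), which differ by one sign, hence one with
   i1 i2 i3 = 1 and one with i1 i2 i3 = -1.  Multiplying over either class of
   cubes therefore yields the product over all 12 squares, and multiplying over
   all 8 cubes yields its square. *)
From HB Require Import structures.
From mathcomp Require Import all_boot all_order all_algebra.
From mathcomp Require Import complex reals ring.
Set Implicit Arguments. Unset Strict Implicit. Unset Printing Implicit Defensive.
Import Order.TTheory GRing.Theory Num.Theory.
Local Open Scope ring_scope.

Lemma Kvpoly_sqr (F : fieldType) (two_neq0 : 2 != 0 :> F)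
    (z000 z100 z010 z001 z011 z101 z110 z111 : F) :
  Kvpoly z000 z100 z010 z001 z011 z101 z110 z111 ^+ 2 =
  (z000 * z011 + z010 * z001) * (z000 * z101 + z100 * z001)
    * (z000 * z110 + z100 * z010)
  + 4^-1 * z000 ^+ 2 * Kpoly z000 z100 z010 z001 z011 z101 z110 z111.
Proof.
have four_neq0 : 4 != 0 :> F by rewrite (_ : 4 = 2 * 2) ?mulf_neq0 //; ring.
by rewrite /Kvpoly /Kpoly; field; rewrite four_neq0 two_neq0.
Qed.

Lemma big_bool2 (R : Type) (idx : R) (op : Monoid.com_law idx)
    (f : bool * bool -> R) :
  \big[op/idx]_i f i =
  op (op (f (true, true)) (f (true, false)))
     (op (f (false, true)) (f (false, false))).
Proof.
transitivity (\big[op/idx]_a \big[op/idx]_b f (a, b)).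
  by rewrite pair_bigA; apply: eq_bigr => -[].
by rewrite !big_bool.
Qed.

Lemma big_bool3 (R : Type) (idx : R) (op : Monoid.com_law idx)
    (f : bool * bool * bool -> R) :
  \big[op/idx]_i f i =
  op (op (op (f (true, true, true)) (f (true, true, false)))
         (op (f (true, false, true)) (f (true, false, false))))
     (op (op (f (false, true, true)) (f (false, true, false)))
         (op (f (false, false, true)) (f (false, false, false)))).
Proof.
transitivity (\big[op/idx]_ab \big[op/idx]_c f (ab, c)).
  by rewrite pair_bigA; apply: eq_bigr => -[].
by rewrite big_bool2 !big_bool.
Qed.

Section VertexStar.
Variables (F : fieldType) (x : pt -> F).

(* Along an axis, C_v(i) spans [v, v + 1] for i = 1 and [v - 1, v] for i = -1. *)
Definition corner_offset (b : bool) : int := if b then 0 else -1.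

Definition vertex_faces (v : pt) (i : bool * bool * bool) : F :=
  sqterm x v (sgnb i.1.1, 0, 0) (0, sgnb i.1.2, 0)
  * sqterm x v (sgnb i.1.1, 0, 0) (0, 0, sgnb i.2)
  * sqterm x v (0, sgnb i.1.2, 0) (0, 0, sgnb i.2).

Lemma kashaev_vertex_labelling v b1 b2 b3 : kashaev x ->
  let z a b c := x (padd v (a * sgnb b1, b * sgnb b2, c * sgnb b3)) in
  Kpoly (z 0 0 0) (z 1 0 0) (z 0 1 0) (z 0 0 1)
        (z 0 1 1) (z 1 0 1) (z 1 1 0) (z 1 1 1) = 0.
Proof.
case: v => [[v1 v2] v3] kashx /=.
have := kashx (v1 + corner_offset b1, v2 + corner_offset b2,
               v3 + corner_offset b3).
rewrite /Kcube /padd /=.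
by case: b1; case: b2; case: b3;
  rewrite /= ?mul0r ?mul1r ?mulr1 ?addr0 ?subrK => <-; rewrite /Kpoly; ring.
Qed.

Lemma Kvb_sqr (two_neq0 : 2 != 0 :> F) v i : kashaev x ->
  Kvb x v i ^+ 2 = vertex_faces v i.
Proof.
case: i v => [[b1 b2] b3] [[v1 v2] v3] kashx.
rewrite /Kvb /Kv Kvpoly_sqr // kashaev_vertex_labelling // mulr0 addr0.
by rewrite /vertex_faces /sqterm /padd /= !mul0r !mul1r !addr0; ring.
Qed.

Lemma prod_even_vertex_faces v :
  \prod_(i | sgnb i.1.1 * sgnb i.1.2 * sgnb i.2 == 1) vertex_faces v i =
  sqprod x v.
Proof. by rewrite big_mkcond big_bool3 /sqprod big_bool2 /vertex_faces /=; ring. Qed.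

Lemma prod_odd_vertex_faces v :
  \prod_(i | sgnb i.1.1 * sgnb i.1.2 * sgnb i.2 == -1) vertex_faces v i =
  sqprod x v.
Proof. by rewrite big_mkcond big_bool3 /sqprod big_bool2 /vertex_faces /=; ring. Qed.

End VertexStar.

Theorem proposition2p8 (R : realType) (x : pt -> R[i]) :
  kashaev x ->
  forall v : pt,
    (\prod_(i : bool * bool * bool) Kvb x v i) ^+ 2 = (sqprod x v) ^+ 2 /\
    (\prod_(i : bool * bool * bool | sgnb i.1.1 * sgnb i.1.2 * sgnb i.2 == 1)
        Kvb x v i) ^+ 2 = sqprod x v /\
    (\prod_(i : bool * bool * bool | sgnb i.1.1 * sgnb i.1.2 * sgnb i.2 == -1)
        Kvb x v i) ^+ 2 = sqprod x v.
Proof.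
move=> kashx v.
have two_neq0 : 2 != 0 :> R[i] by rewrite pnatr_eq0.
have prod_sqr P : (\prod_(i | P i) Kvb x v i) ^+ 2 =
                  \prod_(i | P i) vertex_faces x v i.
  by rewrite -prodrXl; apply: eq_bigr => i _; rewrite Kvb_sqr.
have [even_sqr odd_sqr] :
    (\prod_(i | sgnb i.1.1 * sgnb i.1.2 * sgnb i.2 == 1) Kvb x v i) ^+ 2
      = sqprod x v /\
    (\prod_(i | sgnb i.1.1 * sgnb i.1.2 * sgnb i.2 == -1) Kvb x v i) ^+ 2
      = sqprod x v.
  by rewrite !prod_sqr prod_even_vertex_faces prod_odd_vertex_faces.
split=> //; rewrite [RHS]expr2 -{1}even_sqr -odd_sqr -exprMn.
rewrite (bigID (fun i => sgnb i.1.1 * sgnb i.1.2 * sgnb i.2 == 1)) /=.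
congr ((_ * _) ^+ 2); apply: eq_bigl => -[[[] []] []] //=.
Qed.
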